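(* Let $d\ge1$, $\kappa\ge1$, $\theta>0$ and $\eta\in\mathbb R$, and for $i\ge2$ let $N_i=\lfloor i^\kappa(\log i)^\eta\rfloor$. Then $$\sum_{i=2}^\infty\ \sum_{\{\mathbf n\in\mathbb Z_+^d:\ |\mathbf n|=N_i\}}\frac1{|\mathbf n|^\theta}=\sum_{i=2}^\infty\frac{d(N_i)}{N_i^{\theta}}\ \begin{cases}<\infty,&\theta>1/\kappa,\\=\infty,&\theta<1/\kappa.\end{cases}$$
   Context: $\mathbb Z_+^d$ is the set of $d$-tuples of positive integers; $|\mathbf n|=\prod_{k=1}^d n_k$. For a positive integer $j$, $d(j)=\operatorname{Card}\{\mathbf k\in\mathbb Z_+^d:|\mathbf k|=j\}$ (terms with $N_i=0$, which occur for at most finitely many $i$, are omitted). *)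

From Stdlib Require Import Reals Lra Lia List Arith ZArith.
Import ListNotations.
Open Scope R_scope.

(* |n| = product of the entries of a tuple n (a list of naturals). *)
Definition nprod (k : list nat) : nat := fold_right Nat.mul 1%nat k.

Fixpoint tuples (d j : nat) : list (list nat) :=
  match d with
  | O => [[]]
  | S d' => flat_map (fun x => map (cons x) (tuples d' j)) (seq 1 j)
  end.

(* The (duplicate-free) enumeration of {k in Z_+^d : |k| = j}.
   Any k in Z_+^d with |k| = j >= 1 has all entries in {1,...,j}. *)
Definition level_set (d j : nat) : list (list nat) :=
  filter (fun k => Nat.eqb (nprod k) j) (tuples d j).

Definition dcount (d j : nat) : nat := length (level_set d j).

Definition Nseq (kappa eta : R) (i : nat) : nat :=
  Z.to_nat (Int_part (Rpower (INR i) kappa * Rpower (ln (INR i)) eta)).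

Definition inner_sum (d : nat) (theta : R) (j : nat) : R :=
  fold_right Rplus 0 (map (fun k => / Rpower (INR (nprod k)) theta) (level_set d j)).

(* i-th term d(N_i)/N_i^theta, omitted (= 0) when N_i = 0. *)
Definition term (d : nat) (kappa eta theta : R) (i : nat) : R :=
  let N := Nseq kappa eta i in
  if Nat.eqb N 0 then 0 else INR (dcount d N) / Rpower (INR N) theta.

(* partial sums  sum_{i=2}^{n+2} term i *)
Definition psum (d : nat) (kappa eta theta : R) (n : nat) : R :=
  sum_f_R0 (fun k => term d kappa eta theta (k + 2)) n.

(* The proof compares the terms with powers of i.
   - Arithmetic: every entry of a tuple in the level set {|k| = N} divides N,
     so d(N) <= tau(N)^d, where tau is the number of divisors; and from the
     prime factorisation tau(N)^K <= K^(K 2^K) N for every K >= 1.  Hence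
     d(N) = O(N^eps) for every eps > 0, while trivially d(N) >= 1.
   - Growth of N_i: powers of ln i are dominated by any power of i, so
     c i^k <= N_i eventually for k < kappa and N_i <= C i^k for k > kappa.
   - Series: partial sums of nonnegative sequences are compared beyond a
     fixed index; sum i^(-s) (s > 1) has bounded partial sums by telescoping,
     and sum 1/i diverges since it dominates ln.
   For theta > 1/kappa the terms are O(i^(-s)) with s > 1; for theta < 1/kappa
   they are at least c/i.  The identity for the inner sums holds because all
   tuples in the level set have the same product. *)

From Stdlib Require Import Reals Lra Lia List Arith ZArith.
From mathcomp Require all_boot.

Module DivisorBound.
Set Warnings "-notation-overridden".
Import mathcomp.boot.all_boot.
Local Open Scope nat_scope.

Lemma succ_pow_le_small K e : 0 < K -> e.+1 ^ K <= K ^ K * 2 ^ e.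
Proof.
move=> K_gt0; set q := e %/ K.
have e_lt : e.+1 <= K * q.+1.
  by rewrite mulnS {1}(divn_eq e K) -/q mulnC addnC -addSn leq_add2r ltn_mod.
have q_le : q * K <= e by rewrite /q leq_divM.
apply: (@leq_trans ((K * 2 ^ q) ^ K)).
  rewrite leq_exp2r // (leq_trans e_lt) // leq_mul2l; apply/orP; right.
  exact: ltn_expl.
by rewrite expnMn leq_mul2l -expnM leq_pexp2l // orbT.
Qed.

Lemma succ_pow_le_large K e p : 2 ^ K <= p -> e.+1 ^ K <= p ^ e.
Proof.
move=> p_ge; apply: (@leq_trans ((2 ^ e) ^ K)).
  by case: K p_ge => [|K] _; rewrite ?expn0 // leq_exp2r // ltn_expl.
rewrite -expnM mulnC expnM.
by case: e => [|e]; rewrite ?expn0 // leq_exp2r.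
Qed.

(* Multiplying the two bounds over a factorisation: the small primes cost a
   factor K^K each, the large ones are absorbed by the factorised number. *)
Lemma factorisation_bound K (L : seq (nat * nat)) : 0 < K ->
  all (fun f => 1 < f.1) L ->
  (\prod_(f <- L) f.2.+1) ^ K
    <= (K ^ K) ^ count (fun p => p < 2 ^ K) (unzip1 L) * \prod_(f <- L) f.1 ^ f.2.
Proof.
move=> K_gt0; elim: L => [|[p e] L IH] /=; first by rewrite !big_nil exp1n.
move=> /andP [p_gt1 /IH {}IH]; rewrite !big_cons /= expnMn.
case: ltnP => p_cmp /=.
  rewrite expnS -mulnA [_ ^ _ * (p ^ e * _)]mulnCA mulnA; apply: leq_mul => //.
  apply: (leq_trans (succ_pow_le_small K e K_gt0)); rewrite leq_mul2l.
  apply/orP; right; case: (e) => [|e']; first by rewrite !expn0.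
  by rewrite leq_exp2r.
by rewrite add0n mulnCA; apply: leq_mul => //; apply: succ_pow_le_large.
Qed.

Lemma size_divisors n :
  size (divisors n) = \prod_(f <- prime_decomp n) f.2.+1.
Proof.
rewrite /divisors; elim: (prime_decomp n) => [|[p e] L IH]; first by rewrite big_nil.
rewrite big_cons /= -IH; move: (foldr _ _ L) => ds.
elim: e => [|e IHe] /=; first by rewrite mul1n.
by rewrite (size_merge leq) size_cat size_map IHe mulSn addnC.
Qed.

Lemma divisors_pow_bound K n : 0 < K -> 0 < n ->
  size (divisors n) ^ K <= K ^ (K * 2 ^ K) * n.
Proof.
move=> K_gt0 n_gt0.
have decomp_gt1 : all (fun f => 1 < f.1) (prime_decomp n).
  apply/allP => f f_in; have : f.1 \in primes n by apply: map_f.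
  by rewrite mem_primes => /andP [/prime_gt1].
rewrite size_divisors; apply: (leq_trans (factorisation_bound _ _ K_gt0 decomp_gt1)).
rewrite -(prod_prime_decomp n_gt0) leq_mul2r expnM leq_pexp2l ?expn_gt0 ?K_gt0 ?orbT //.
rewrite -size_filter -[X in _ <= X](size_iota 0); apply: uniq_leq_size.
  by rewrite filter_uniq // primes_uniq.
by move=> x; rewrite mem_filter mem_iota add0n => /andP [-> _].
Qed.

Lemma divisors_pow_bound_nat K n : (1 <= K)%coq_nat -> (1 <= n)%coq_nat ->
  (Nat.pow (length (divisors n)) K <= Nat.pow K (K * Nat.pow 2 K) * n)%coq_nat.
Proof.
move=> /leP K_gt0 /leP n_gt0; apply/leP.
have pow_expn a b : Nat.pow a b = a ^ b by elim: b => //= b ->; rewrite expnS.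
have -> : length (divisors n) = size (divisors n) by elim: (divisors n) => //= a s ->.
by rewrite !pow_expn; apply: divisors_pow_bound.
Qed.

Lemma In_divisors x n : (1 <= n)%coq_nat -> Nat.divide x n -> List.In x (divisors n).
Proof.
move=> /leP n_gt0 [z def_n].
have : x \in divisors n by rewrite -dvdn_divisors //; apply/dvdnP; exists z.
elim: (divisors n) => [|a s IH] //=.
by rewrite in_cons => /orP [/eqP ->|/IH]; [left|right].
Qed.
End DivisorBound.

Import ListNotations.
Local Open Scope nat_scope.

Lemma nprod_divide x k : In x k -> Nat.divide x (nprod k).
Proof.
  induction k as [|a k IH]; simpl; [tauto|].
  intros [->|Hin].
  - exists (nprod k). lia.
  - destruct (IH Hin) as [z ->]. exists (a * z). lia.
Qed.

Lemma filter_length_mono {A} (f g : A -> bool) (l : list A) :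
  (forall x, In x l -> f x = true -> g x = true) ->
  length (filter f l) <= length (filter g l).
Proof.
  induction l as [|a l IH]; simpl; intros Himp; [lia|].
  specialize (IH (fun x Hx => Himp x (or_intror Hx))).
  destruct (f a) eqn:Ef.
  - rewrite (Himp a (or_introl eq_refl) Ef). simpl. lia.
  - destruct (g a); simpl; lia.
Qed.

Section TuplesOver.
Variable p : nat -> bool.
Variable j : nat.

Lemma filter_forallb_cons x (T : list (list nat)) :
  filter (forallb p) (map (cons x) T)
  = if p x then map (cons x) (filter (forallb p) T) else [].
Proof.
  induction T as [|k T IH]; simpl; [destruct (p x); reflexivity|].
  destruct (p x); simpl; [destruct (forallb p k); simpl|]; rewrite IH; reflexivity.
Qed.

(* The d-tuples over {1..j} whose entries all satisfy p are the d-tuples over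
   {x in 1..j | p x}; hence there are (#{x in 1..j | p x})^d of them. *)
Lemma count_tuples_forall d :
  length (filter (forallb p) (tuples d j)) = length (filter p (seq 1 j)) ^ d.
Proof.
  induction d as [|d IH]; simpl; [reflexivity|].
  rewrite <- IH. clear IH.
  induction (seq 1 j) as [|x xs IHxs]; simpl; [reflexivity|].
  rewrite filter_app, length_app, filter_forallb_cons, IHxs.
  destruct (p x); simpl; rewrite ?length_map; lia.
Qed.
End TuplesOver.

(* d(j) <= tau(j)^d: every entry of a tuple in the level set divides j. *)
Lemma dcount_le_divisors_pow d j : 1 <= j ->
  dcount d j <= length (prime.divisors j) ^ d.
Proof.
  intros Hj.
  set (is_divisor := fun x => existsb (Nat.eqb x) (prime.divisors j)).
  apply Nat.le_trans with (length (filter (forallb is_divisor) (tuples d j))).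
  - apply filter_length_mono. intros k _ Hk.
    apply Nat.eqb_eq in Hk. apply forallb_forall. intros x Hx.
    apply existsb_exists. exists x. split; [|apply Nat.eqb_refl].
    apply DivisorBound.In_divisors; [exact Hj|]. rewrite <- Hk. now apply nprod_divide.
  - rewrite count_tuples_forall. apply Nat.pow_le_mono_l, NoDup_incl_length.
    + apply NoDup_filter, seq_NoDup.
    + intros x Hx. apply filter_In in Hx as [_ Hx].
      apply existsb_exists in Hx as [y [Hy Hxy]]. apply Nat.eqb_eq in Hxy. now subst.
Qed.

(* d(j) >= 1 for d >= 1 and j >= 1, witnessed by (j, 1, ..., 1). *)
Lemma dcount_pos d j : 1 <= d -> 1 <= j -> 1 <= dcount d j.
Proof.
  intros Hd Hj. destruct d as [|d]; [lia|].
  assert (Hones : forall m, In (repeat 1 m) (tuples m j) /\ nprod (repeat 1 m) = 1).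
  { induction m as [|m [IHin IHprod]]; simpl; [tauto|].
    split; [|now rewrite IHprod].
    apply in_flat_map. exists 1. split; [apply in_seq; lia|]. now apply in_map. }
  assert (Hwit : In (j :: repeat 1 d) (level_set (S d) j)).
  { destruct (Hones d) as [Hin Hprod]. apply filter_In. split.
    - apply in_flat_map. exists j. split; [apply in_seq; lia|]. now apply in_map.
    - apply Nat.eqb_eq. simpl. rewrite Hprod. lia. }
  unfold dcount. destruct (level_set (S d) j); simpl in *; [tauto|lia].
Qed.
Local Open Scope R_scope.

Lemma exp_le_mono x y : x <= y -> exp x <= exp y.
Proof. intros [Hlt| ->]; [left; now apply exp_increasing|lra]. Qed.

Lemma ln_le_mono x y : 0 < x -> x <= y -> ln x <= ln y.
Proof. intros Hx [Hlt| ->]; [left; now apply ln_increasing|lra]. Qed.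

Lemma Rpower_pos x y : 0 < Rpower x y.
Proof. apply exp_pos. Qed.

Lemma Rpower_base1 y : Rpower 1 y = 1.
Proof. unfold Rpower. now rewrite ln_1, Rmult_0_r, exp_0. Qed.

Lemma Rpower_ge_tangent t a : 1 + a * ln t <= Rpower t a.
Proof. apply exp_ineq1_le. Qed.

Lemma ln_le_sub1 y : 0 < y -> ln y <= y - 1.
Proof. intros Hy. pose proof (exp_ineq1_le (ln y)) as H. rewrite exp_ln in H; lra. Qed.

Lemma Rpower_antitone e a b : e <= 0 -> 0 < a -> a <= b -> Rpower b e <= Rpower a e.
Proof.
  intros He Ha Hab. unfold Rpower. apply exp_le_mono.
  apply Rmult_le_compat_neg_l; [exact He|now apply ln_le_mono].
Qed.

Lemma ln_le_pow_div x a : 0 < x -> 0 < a -> ln x <= Rpower x a / a.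
Proof.
  intros Hx Ha. apply Rmult_le_reg_l with a; [exact Ha|].
  replace (a * (Rpower x a / a)) with (Rpower x a) by (field; lra).
  rewrite <- ln_Rpower. pose proof (ln_le_sub1 (Rpower x a) (Rpower_pos x a)). lra.
Qed.

(* Beyond 3 > e the logarithm is at least 1, so its real powers behave well. *)
Lemma ln_ge1 x : 3 <= x -> 1 <= ln x.
Proof.
  intros Hx. rewrite <- (ln_exp 1). pose proof exp_le_3.
  apply ln_le_mono; [apply exp_pos|lra].
Qed.

Lemma ln_pow_le_pow beta mu : 0 < mu ->
  exists C, 0 < C /\ forall x, 3 <= x -> Rpower (ln x) beta <= C * Rpower x mu.
Proof.
  intros Hmu. destruct (Rle_or_lt beta 0) as [Hb|Hb].
  - exists 1. split; [lra|]. intros x Hx. pose proof (ln_ge1 x Hx).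
    apply Rle_trans with 1.
    + rewrite <- (Rpower_base1 beta). apply Rpower_antitone; lra.
    + rewrite Rmult_1_l, <- (Rpower_base1 mu). apply Rle_Rpower_l; lra.
  - set (a := mu / beta).
    assert (Ha : 0 < a) by (apply Rdiv_lt_0_compat; lra).
    exists (Rpower (/ a) beta). split; [apply Rpower_pos|]. intros x Hx.
    pose proof (ln_ge1 x Hx).
    apply Rle_trans with (Rpower (Rpower x a / a) beta).
    + apply Rle_Rpower_l; [lra|]. split; [lra|]. apply ln_le_pow_div; lra.
    + right. unfold Rdiv. rewrite Rmult_comm, <- Rpower_mult_distr, Rpower_mult
        by (apply Rinv_0_lt_compat || apply Rpower_pos; lra).
      unfold a. f_equal. f_equal. field. lra.
Qed.

Lemma ln_pow_ge_pow beta mu : 0 < mu ->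
  exists c, 0 < c /\ forall x, 3 <= x -> c * Rpower x (- mu) <= Rpower (ln x) beta.
Proof.
  intros Hmu. destruct (ln_pow_le_pow (- beta) mu Hmu) as [C [HC Hup]].
  exists (/ C). split; [now apply Rinv_0_lt_compat|]. intros x Hx.
  rewrite <- (Rinv_inv (Rpower (ln x) beta)), <- Rpower_Ropp, Rpower_Ropp, <- Rinv_mult.
  apply Rinv_le_contravar; [apply Rpower_pos|exact (Hup x Hx)].
Qed.

Lemma pow_eventually_ge c p A : 0 < c -> 0 < p ->
  exists i0, (3 <= i0)%nat /\ forall i, (i0 <= i)%nat -> A <= c * Rpower (INR i) p.
Proof.
  intros Hc Hp. set (A' := Rmax A 1).
  assert (HA' : 0 < A' / c) by (apply Rdiv_lt_0_compat; [pose proof (Rmax_r A 1); unfold A'; lra|exact Hc]).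
  destruct (INR_unbounded (Rpower (A' / c) (/ p))) as [n Hn].
  exists (Nat.max 3 n). split; [lia|]. intros i Hi.
  assert (Hni : INR n <= INR i) by (apply le_INR; lia).
  assert (Hpow : A' / c <= Rpower (INR i) p).
  { rewrite <- (Rpower_1 (A' / c)) by exact HA'.
    rewrite <- (Rinv_l p) by lra. rewrite <- Rpower_mult.
    apply Rle_Rpower_l; [lra|]. split; [apply Rpower_pos|lra]. }
  pose proof (Rmax_l A 1).
  apply Rmult_le_compat_l with (r := c) in Hpow; [|lra].
  replace (c * (A' / c)) with A' in Hpow by (field; lra). unfold A' in *. lra.
Qed.

Lemma nat_le_root a b K : (a ^ K <= b)%nat -> (1 <= K)%nat ->
  INR a <= Rpower (INR b) (/ INR K).
Proof.
  intros Hab HK. assert (HKr : 0 < INR K) by (apply lt_0_INR; lia).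
  destruct a as [|a]; [left; apply Rpower_pos|].
  assert (Ha : 0 < INR (S a)) by (apply lt_0_INR; lia).
  rewrite <- (Rpower_1 (INR (S a))) by exact Ha.
  rewrite <- (Rinv_r (INR K)) by lra. rewrite <- Rpower_mult, Rpower_pow by exact Ha.
  apply Rle_Rpower_l; [left; now apply Rinv_0_lt_compat|].
  split; [now apply pow_lt|]. rewrite <- pow_INR. now apply le_INR.
Qed.

Lemma partial_sum_mono (u : nat -> R) n m :
  (forall k, 0 <= u k) -> (n <= m)%nat -> sum_f_R0 u n <= sum_f_R0 u m.
Proof.
  intros Hu Hnm. apply Rge_le, growing_prop; [|exact Hnm].
  intros k. simpl. specialize (Hu (S k)). lra.
Qed.

Lemma partial_sum_le_eventually (u v : nat -> R) (B : R) (m : nat) :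
  (forall k, 0 <= u k) -> (forall k, 0 <= v k) -> 0 <= B ->
  (forall k, (m < k)%nat -> u k <= B * v k) ->
  forall n, sum_f_R0 u n <= sum_f_R0 u m + B * sum_f_R0 v n.
Proof.
  intros Hu Hv HB Hle n.
  assert (Hsv : forall n, 0 <= B * sum_f_R0 v n)
    by (intros; apply Rmult_le_pos; [exact HB|now apply cond_pos_sum]).
  induction n as [|n IH].
  - pose proof (partial_sum_mono u 0 m Hu (Nat.le_0_l m)). pose proof (Hsv 0%nat). lra.
  - destruct (le_lt_dec (S n) m) as [Hsm|Hms].
    + pose proof (partial_sum_mono u _ _ Hu Hsm). pose proof (Hsv (S n)). lra.
    + simpl. pose proof (Hle (S n) Hms). lra.
Qed.

Lemma p_series_step x s : 1 < x -> 1 < s ->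
  (s - 1) * Rpower x (- s) <= Rpower (x - 1) (1 - s) - Rpower x (1 - s).
Proof.
  intros Hx Hs. set (t := (x - 1) / x).
  assert (Ht : 0 < t) by (apply Rdiv_lt_0_compat; lra).
  assert (Hsplit : Rpower (x - 1) (1 - s) = Rpower x (1 - s) * Rpower t (1 - s)).
  { rewrite Rpower_mult_distr by lra. f_equal. unfold t. field. lra. }
  assert (Hshift : Rpower x (- s) = Rpower x (1 - s) / x).
  { replace (- s) with ((1 - s) + - (1)) by ring.
    rewrite Rpower_plus, Rpower_Ropp, Rpower_1 by lra. reflexivity. }
  assert (Hlnt : (s - 1) / x <= (1 - s) * ln t).
  { pose proof (ln_le_sub1 t Ht).
    replace ((s - 1) / x) with ((1 - s) * (t - 1)) by (unfold t; field; lra).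
    apply Rmult_le_compat_neg_l; lra. }
  pose proof (Rpower_ge_tangent t (1 - s)). pose proof (Rpower_pos x (1 - s)).
  rewrite Hsplit, Hshift.
  apply Rle_trans with (Rpower x (1 - s) * ((s - 1) / x)); [right; field; lra|].
  assert (Rpower x (1 - s) * ((s - 1) / x) <= Rpower x (1 - s) * (Rpower t (1 - s) - 1))
    by (apply Rmult_le_compat_l; lra).
  lra.
Qed.

Lemma p_series_bounded s : 1 < s ->
  forall n, sum_f_R0 (fun k => Rpower (INR (k + 2)) (- s)) n <= / (s - 1).
Proof.
  intros Hs.
  assert (Htel : forall n, (s - 1) * sum_f_R0 (fun k => Rpower (INR (k + 2)) (- s)) n
                             <= 1 - Rpower (INR (n + 2)) (1 - s)).
  { induction n as [|n IH]; cbn [sum_f_R0].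
    - pose proof (p_series_step 2 s ltac:(lra) Hs) as H.
      replace (2 - 1) with 1 in H by ring. rewrite Rpower_base1 in H.
      replace (INR (0 + 2)) with 2 by (simpl; ring). exact H.
    - pose proof (p_series_step (INR (S n + 2)) s) as H.
      replace (INR (S n + 2) - 1) with (INR (n + 2)) in H
        by (replace (S n + 2)%nat with (S (n + 2)) by lia; rewrite S_INR; ring).
      assert (H2 : 1 < INR (S n + 2)) by (apply (lt_INR 1); lia).
      specialize (H H2 Hs). rewrite Rmult_plus_distr_l. lra. }
  intros n. pose proof (Htel n). pose proof (Rpower_pos (INR (n + 2)) (1 - s)).
  apply Rmult_le_reg_l with (s - 1); [lra|]. rewrite Rinv_r by lra. lra.
Qed.

Lemma ln_succ_sub x : 0 < x -> ln (x + 1) - ln x <= / x.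
Proof.
  intros Hx.
  replace (ln (x + 1) - ln x) with (ln ((x + 1) / x))
    by (unfold Rdiv; rewrite ln_mult, ln_Rinv; try ring; try lra; apply Rinv_0_lt_compat; lra).
  pose proof (ln_le_sub1 ((x + 1) / x) ltac:(apply Rdiv_lt_0_compat; lra)).
  replace ((x + 1) / x - 1) with (/ x) in * by (field; lra). lra.
Qed.

Lemma harmonic_cv_infty : cv_infty (fun n => sum_f_R0 (fun k => / INR (k + 2)) n).
Proof.
  assert (Hln : forall n, ln (INR (n + 3)) - ln 2 <= sum_f_R0 (fun k => / INR (k + 2)) n).
  { induction n as [|n IH]; cbn [sum_f_R0].
    - pose proof (ln_succ_sub 2 ltac:(lra)).
      replace (INR (0 + 3)) with (2 + 1) by (simpl; ring).
      replace (INR (0 + 2)) with 2 by (simpl; ring). lra.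
    - pose proof (ln_succ_sub (INR (n + 3)) ltac:(apply lt_0_INR; lia)).
      replace (INR (S n + 3)) with (INR (n + 3) + 1) by (rewrite <- S_INR; f_equal; lia).
      replace (S n + 2)%nat with (n + 3)%nat by lia. lra. }
  intros M. destruct (INR_unbounded (exp (M + ln 2))) as [n0 Hn0].
  exists n0. intros n Hn. eapply Rlt_le_trans; [|apply Hln].
  assert (M + ln 2 < ln (INR (n + 3))); [|lra].
  rewrite <- (ln_exp (M + ln 2)). apply ln_increasing; [apply exp_pos|].
  apply Rlt_le_trans with (INR n0); [lra|]. apply le_INR. lia.
Qed.

Definition profile (kappa eta : R) (i : nat) : R :=
  Rpower (INR i) kappa * Rpower (ln (INR i)) eta.

Lemma profile_pos kappa eta i : 0 < profile kappa eta i.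
Proof. apply Rmult_lt_0_compat; apply Rpower_pos. Qed.

Lemma Nseq_floor kappa eta i :
  INR (Nseq kappa eta i) <= profile kappa eta i < INR (Nseq kappa eta i) + 1.
Proof.
  unfold Nseq. fold (profile kappa eta i).
  pose proof (profile_pos kappa eta i).
  destruct (base_Int_part (profile kappa eta i)) as [Hle Hgt].
  assert (Hnn : (0 <= Int_part (profile kappa eta i))%Z).
  { assert (Hm1 : IZR (-1) < IZR (Int_part (profile kappa eta i))) by lra.
    apply lt_IZR in Hm1. lia. }
  rewrite INR_IZR_INZ, Z2Nat.id by exact Hnn. lra.
Qed.

(* The profile bounds are stated for i >= 3, where ln i >= 1. *)
Lemma INR_ge3 i : (3 <= i)%nat -> 3 <= INR i.
Proof. intros Hi. apply le_INR in Hi. simpl in Hi. lra. Qed.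

Lemma Nseq_upper kappa eta k : kappa < k ->
  exists C, 0 < C /\ forall i, (3 <= i)%nat -> INR (Nseq kappa eta i) <= C * Rpower (INR i) k.
Proof.
  intros Hk. destruct (ln_pow_le_pow eta (k - kappa) ltac:(lra)) as [C [HC Hln]].
  exists C. split; [exact HC|]. intros i Hi.
  assert (Hi3 : 3 <= INR i) by (apply INR_ge3; lia).
  destruct (Nseq_floor kappa eta i) as [Hfl _]. eapply Rle_trans; [exact Hfl|].
  unfold profile. pose proof (Rpower_pos (INR i) kappa).
  apply Rle_trans with (Rpower (INR i) kappa * (C * Rpower (INR i) (k - kappa))).
  - apply Rmult_le_compat_l; [lra|exact (Hln _ Hi3)].
  - right. replace k with (kappa + (k - kappa)) at 2 by ring.
    rewrite Rpower_plus. ring.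
Qed.

Lemma Nseq_lower kappa eta k : 0 < k < kappa ->
  exists c i0, 0 < c /\ forall i, (i0 <= i)%nat ->
    1 <= INR (Nseq kappa eta i) /\ c * Rpower (INR i) k <= INR (Nseq kappa eta i).
Proof.
  intros Hk. destruct (ln_pow_ge_pow eta (kappa - k) ltac:(lra)) as [c [Hc Hln]].
  destruct (pow_eventually_ge c k 2 Hc ltac:(lra)) as [i0 [Hi03 Hi0]].
  exists (c / 2), i0. split; [lra|]. intros i Hi.
  assert (Hi3 : 3 <= INR i) by (apply INR_ge3; lia).
  assert (Hprof : c * Rpower (INR i) k <= profile kappa eta i).
  { unfold profile. pose proof (Rpower_pos (INR i) kappa).
    replace k with (kappa + - (kappa - k)) at 1 by ring. rewrite Rpower_plus.
    specialize (Hln _ Hi3). nra. }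
  specialize (Hi0 i Hi). destruct (Nseq_floor kappa eta i). split; lra.
Qed.

(* d(N) = O(N^eps) for every eps > 0: combine d(N) <= tau(N)^d with
   tau(N) <= (C_K N)^(1/K) for K > d / eps. *)
Lemma dcount_subpolynomial d eps : 0 < eps ->
  exists C, 0 < C /\ forall N, (1 <= N)%nat -> INR (dcount d N) <= C * Rpower (INR N) eps.
Proof.
  intros Heps. destruct (INR_unbounded (INR d / eps)) as [n0 Hn0].
  set (K := S n0). set (CK := (K ^ (K * 2 ^ K))%nat). set (delta := / INR K * INR d).
  assert (HK : 0 < INR K) by (apply lt_0_INR; unfold K; lia).
  assert (HCK : 0 < INR CK) by (apply lt_0_INR; apply Nat.neq_0_lt_0, Nat.pow_nonzero; unfold K; lia).
  assert (Hdelta : delta <= eps).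
  { assert (Hd : INR d < eps * INR K).
    { replace (INR d) with (eps * (INR d / eps)) by (field; lra).
      apply Rmult_lt_compat_l; [exact Heps|]. unfold K. rewrite S_INR. lra. }
    unfold delta. apply Rmult_le_reg_l with (INR K); [exact HK|].
    rewrite <- Rmult_assoc, Rinv_r, Rmult_1_l by lra. lra. }
  exists (Rpower (INR CK) delta). split; [apply Rpower_pos|]. intros N HN.
  assert (HNr : 1 <= INR N) by (apply (le_INR 1) in HN; exact HN).
  assert (Htau : INR (length (prime.divisors N)) <= Rpower (INR (CK * N)) (/ INR K))
    by (apply nat_le_root; [apply DivisorBound.divisors_pow_bound_nat|]; unfold K; lia).
  apply Rle_trans with (INR (length (prime.divisors N)) ^ d).
  { rewrite <- pow_INR. apply le_INR, dcount_le_divisors_pow, HN. }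
  apply Rle_trans with (Rpower (INR (CK * N)) delta).
  { unfold delta. rewrite <- Rpower_mult, Rpower_pow by apply Rpower_pos.
    apply pow_incr. split; [apply pos_INR|exact Htau]. }
  rewrite mult_INR, <- Rpower_mult_distr by lra.
  apply Rmult_le_compat_l; [left; apply Rpower_pos|]. apply Rle_Rpower; lra.
Qed.

(* All tuples of the level set have product N, so the inner sum is d(N)/N^theta. *)
Lemma inner_sum_eq d theta N :
  inner_sum d theta N = INR (dcount d N) / Rpower (INR N) theta.
Proof.
  unfold inner_sum, dcount.
  assert (Hconst : forall l, (forall k, In k l -> nprod k = N) ->
    fold_right Rplus 0 (map (fun k => / Rpower (INR (nprod k)) theta) l)
    = INR (length l) / Rpower (INR N) theta).
  { induction l as [|k l IH]; intros Hl; [simpl; unfold Rdiv; ring|].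
    cbn [map fold_right length].
    rewrite IH by (intros; apply Hl; now right). rewrite Hl by now left.
    rewrite S_INR. unfold Rdiv. ring. }
  apply Hconst. intros k Hk. apply filter_In in Hk as [_ Hk]. now apply Nat.eqb_eq.
Qed.

Lemma term_nonneg d kappa eta theta i : 0 <= term d kappa eta theta i.
Proof.
  unfold term. destruct (Nat.eqb _ 0); [lra|].
  apply Rmult_le_pos; [apply pos_INR|left; apply Rinv_0_lt_compat, Rpower_pos].
Qed.

Lemma term_eq d kappa eta theta i : (1 <= Nseq kappa eta i)%nat ->
  term d kappa eta theta i
  = INR (dcount d (Nseq kappa eta i)) / Rpower (INR (Nseq kappa eta i)) theta.
Proof. intros HN. unfold term. destruct (Nat.eqb_spec (Nseq kappa eta i) 0); [lia|reflexivity]. Qed.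

(* Convergent regime: if kappa theta > 1, the terms are eventually O(i^(-s))
   for some s > 1.  Take 1/theta < k < kappa and eps with k (theta - eps) > 1:
   d(N_i)/N_i^theta <= C N_i^(eps - theta) <= C (c i^k)^(eps - theta). *)
Lemma term_upper d kappa eta theta : 0 < theta -> 1 < kappa * theta ->
  exists s B i0, 1 < s /\ 0 <= B /\ forall i, (i0 <= i)%nat ->
    term d kappa eta theta i <= B * Rpower (INR i) (- s).
Proof.
  intros Ht Hkt.
  set (k := (kappa + / theta) / 2). set (eps := (theta - / k) / 2).
  assert (Hinv : / theta < kappa)
    by (apply Rmult_lt_reg_l with theta; [exact Ht|]; rewrite Rinv_r; lra).
  assert (Hk : / theta < k < kappa) by (unfold k; lra).
  assert (Hk0 : 0 < k) by (pose proof (Rinv_0_lt_compat theta Ht); lra).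
  assert (Hkt' : 1 < k * theta)
    by (apply Rmult_lt_reg_r with (/ theta); [now apply Rinv_0_lt_compat|];
        rewrite Rmult_assoc, Rinv_r, Rmult_1_r, Rmult_1_l; lra).
  assert (Hinvk : / k < theta)
    by (apply Rmult_lt_reg_l with k; [exact Hk0|]; rewrite Rinv_r; lra).
  assert (Heps : 0 < eps < theta)
    by (pose proof (Rinv_0_lt_compat k Hk0); unfold eps; lra).
  destruct (Nseq_lower kappa eta k ltac:(lra)) as [c [i0 [Hc Hlow]]].
  destruct (dcount_subpolynomial d eps ltac:(lra)) as [C [HC Hdiv]].
  exists (k * (theta - eps)), (C * Rpower c (eps - theta)), i0.
  split; [|split].
  - unfold eps. replace (k * (theta - (theta - / k) / 2)) with ((k * theta + 1) / 2)
      by (field; lra). lra.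
  - left. apply Rmult_lt_0_compat; [exact HC|apply Rpower_pos].
  - intros i Hi. destruct (Hlow i Hi) as [HN1 HNi].
    set (N := Nseq kappa eta i) in *.
    assert (HN : (1 <= N)%nat) by (apply INR_le; exact HN1).
    rewrite term_eq by exact HN. fold N.
    pose proof (Rpower_pos c (eps - theta)). pose proof (Rpower_pos (INR i) k).
    apply Rle_trans with (C * Rpower (INR N) (eps - theta)).
    + unfold Rminus. rewrite Rpower_plus, Rpower_Ropp, <- Rmult_assoc.
      apply Rmult_le_compat_r; [left; apply Rinv_0_lt_compat, Rpower_pos|exact (Hdiv N HN)].
    + rewrite Rmult_assoc. apply Rmult_le_compat_l; [lra|].
      apply Rle_trans with (Rpower (c * Rpower (INR i) k) (eps - theta)).
      * apply Rpower_antitone; [lra| |exact HNi]. apply Rmult_lt_0_compat; lra.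
      * right. rewrite <- Rpower_mult_distr, Rpower_mult by lra. f_equal. f_equal. ring.
Qed.

(* Divergent regime: if kappa theta < 1 and d >= 1, the terms are eventually
   >= c / i, since d(N_i) >= 1 and N_i <= C i^(1/theta). *)
Lemma term_lower d kappa eta theta : (1 <= d)%nat -> 0 < kappa -> 0 < theta ->
  kappa * theta < 1 ->
  exists c i0, 0 < c /\ forall i, (i0 <= i)%nat -> c * / INR i <= term d kappa eta theta i.
Proof.
  intros Hd Hk Ht Hkt.
  assert (Hinv : kappa < / theta)
    by (apply Rmult_lt_reg_r with theta; [exact Ht|]; rewrite Rinv_l; lra).
  destruct (Nseq_upper kappa eta (/ theta) Hinv) as [C [HC Hup]].
  destruct (Nseq_lower kappa eta (kappa / 2) ltac:(lra)) as [c [i1 [Hc Hlow]]].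
  exists (/ Rpower C theta), (Nat.max 3 i1). split; [apply Rinv_0_lt_compat, Rpower_pos|].
  intros i Hi. destruct (Hlow i ltac:(lia)) as [HN1 _].
  set (N := Nseq kappa eta i) in *.
  assert (HN : (1 <= N)%nat) by (apply INR_le; exact HN1).
  assert (Hi0 : 0 < INR i) by (apply lt_0_INR; lia).
  assert (HNpow : Rpower (INR N) theta <= Rpower C theta * INR i).
  { apply Rle_trans with (Rpower (C * Rpower (INR i) (/ theta)) theta).
    - apply Rle_Rpower_l; [lra|]. split; [lra|]. apply Hup. lia.
    - right. rewrite <- Rpower_mult_distr, Rpower_mult, Rinv_l, Rpower_1
        by (lra || apply Rpower_pos). reflexivity. }
  rewrite term_eq by exact HN. fold N.
  pose proof (dcount_pos d N Hd HN) as Hdc. apply le_INR in Hdc. simpl in Hdc.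
  pose proof (Rpower_pos (INR N) theta). pose proof (Rpower_pos C theta).
  rewrite <- Rinv_mult. unfold Rdiv.
  apply Rle_trans with (1 * / Rpower (INR N) theta).
  - rewrite Rmult_1_l. apply Rinv_le_contravar; [exact H|exact HNpow].
  - apply Rmult_le_compat_r; [left; now apply Rinv_0_lt_compat|exact Hdc].
Qed.

Lemma psum_converges d kappa eta theta : 0 < kappa -> 0 < theta -> theta > 1 / kappa ->
  exists l, Un_cv (psum d kappa eta theta) l.
Proof.
  intros Hk Ht Hth.
  assert (Hkt : 1 < kappa * theta)
    by (apply Rmult_lt_compat_l with (r := kappa) in Hth; [|exact Hk];
        replace (kappa * (1 / kappa)) with 1 in Hth by (field; lra); lra).
  destruct (term_upper d kappa eta theta Ht Hkt) as [s [B [i0 [Hs [HB Hle]]]]].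
  assert (Hbound : forall n, psum d kappa eta theta n
                              <= psum d kappa eta theta i0 + B * / (s - 1)).
  { intros n. unfold psum.
    eapply Rle_trans; [apply (partial_sum_le_eventually _ (fun k => Rpower (INR (k + 2)) (- s)) B i0)|].
    - intros k. apply term_nonneg.
    - intros k. left. apply Rpower_pos.
    - exact HB.
    - intros k Hki. apply Hle. lia.
    - apply Rplus_le_compat_l, Rmult_le_compat_l; [exact HB|]. now apply p_series_bounded. }
  destruct (growing_cv (psum d kappa eta theta)) as [l Hl].
  - intros n. unfold psum. cbn [sum_f_R0]. pose proof (term_nonneg d kappa eta theta (S n + 2)). lra.
  - exists (psum d kappa eta theta i0 + B * / (s - 1)). intros x [n ->]. apply Hbound.
  - now exists l.
Qed.

Lemma psum_diverges d kappa eta theta : (1 <= d)%nat -> 0 < kappa -> 0 < theta ->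
  theta < 1 / kappa -> cv_infty (psum d kappa eta theta).
Proof.
  intros Hd Hk Ht Hth.
  assert (Hkt : kappa * theta < 1)
    by (apply Rmult_lt_compat_l with (r := kappa) in Hth; [|exact Hk];
        replace (kappa * (1 / kappa)) with 1 in Hth by (field; lra); lra).
  destruct (term_lower d kappa eta theta Hd Hk Ht Hkt) as [c [i0 [Hc Hge]]].
  set (harm := fun n => sum_f_R0 (fun k => / INR (k + 2)) n).
  assert (Hcmp : forall n, harm n <= harm i0 + / c * psum d kappa eta theta n).
  { apply partial_sum_le_eventually.
    - intros k. left. apply Rinv_0_lt_compat, lt_0_INR. lia.
    - intros k. apply term_nonneg.
    - left. now apply Rinv_0_lt_compat.
    - intros k Hki. specialize (Hge (k + 2)%nat ltac:(lia)).
      apply Rmult_le_reg_l with c; [exact Hc|].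
      rewrite <- Rmult_assoc, Rinv_r, Rmult_1_l by lra. exact Hge. }
  intros M. destruct (harmonic_cv_infty (harm i0 + M / c)) as [n0 Hn0].
  exists n0. intros n Hn. specialize (Hn0 n Hn). specialize (Hcmp n).
  change (harm i0 + M / c < harm n) in Hn0.
  assert (Hlt : M / c < / c * psum d kappa eta theta n) by lra.
  apply Rmult_lt_compat_l with (r := c) in Hlt; [|exact Hc].
  replace (c * (M / c)) with M in Hlt by (field; lra).
  rewrite <- Rmult_assoc, Rinv_r, Rmult_1_l in Hlt by lra. exact Hlt.
Qed.

Theorem lemma3p3 (d : nat) (kappa theta eta : R)
  (hd : (1 <= d)%nat) (hk : 1 <= kappa) (ht : 0 < theta) :
  (forall i : nat, (2 <= i)%nat -> Nseq kappa eta i <> 0%nat ->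
     inner_sum d theta (Nseq kappa eta i)
     = INR (dcount d (Nseq kappa eta i)) / Rpower (INR (Nseq kappa eta i)) theta) /\
  (theta > 1 / kappa -> exists l : R, Un_cv (psum d kappa eta theta) l) /\
  (theta < 1 / kappa -> cv_infty (psum d kappa eta theta)).
Proof.
  split; [|split].
  - intros i _ _. apply inner_sum_eq.
  - apply psum_converges; lra.
  - apply psum_diverges; [exact hd|lra|exact ht].
Qed.
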